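(* For each combinatorial line $L$ of $\mathrm{HJ}(d,n)$, there is an affine function $g_L:\mathbb{R}^5\to\mathbb{R}$ that vanishes on $\nu(P_L)$ and is positive on $\nu(P\setminus P_L)$. Hence $\conv(\nu(P_L))$ is a face of $\conv(\nu(P))$.
   Context: Combinatorial lines and $\mathrm{HJ}(d,n)$: for $\tau\in([d]\cup\{*\})^n\setminus[d]^n$ and $k\in\mathbb{R}$, $\sigma(\tau,k)$ is $\tau$ with every $*$ replaced by $k$; the combinatorial line is $L_\tau=\{\sigma(\tau,k):k\in[d]\}$, and $\mathrm{HJ}(d,n)$ is the hypergraph on $[d]^n$ whose hyperedges are all combinatorial lines. Choose vectors $v_1,\dots,v_n\in\mathbb{R}^2$, each with positive $x$-component, and for $\sigma\in\mathbb{R}^n$ set $p_\sigma=\sum_{i=1}^n\sigma_i v_i$; the $v_i$ are (after perturbation) such that the points $p_\sigma$, $\sigma\in[d]^n$, are distinct. Let $P=\{p_\sigma:\sigma\in[d]^n\}$. For a combinatorial line $L=L_\tau$, let $P_L=\{p_\sigma:\sigma\in L\}$ and let $S_L=\{p_{\sigma(\tau,t)}:t\in\mathbb{R}\}$ be the affine span of $P_L$, a line $y=a_Lx+b_L$ of finite slope. The $v_i$ are further assumed (after perturbation) to satisfy $S_L\cap P=P_L$ for every combinatorial line $L$. The map $\nu:\mathbb{R}^2\to\mathbb{R}^5$ is $\nu(x,y)=(x^2,xy,y^2,x,y)$. *)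

From HB Require Import structures.
From mathcomp Require Import all_boot all_order all_algebra.
Set Implicit Arguments. Unset Strict Implicit. Unset Printing Implicit Defensive.
Import Order.TTheory GRing.Theory Num.Theory.
Local Open Scope ring_scope.

Section Defs.
Variable R : realFieldType.

(* [d] = {1,...,d}; an element of [d]^n is s : {ffun 'I_n -> 'I_d}, where
   the ordinal j : 'I_d stands for the integer j+1.  Its real vector: *)
Definition word_vec (n d : nat) (s : {ffun 'I_n -> 'I_d}) : 'I_n -> R :=
  fun i => ((s i).+1)%:R.

(* tau in ([d] u {*})^n : None stands for the wildcard * *)
Definition is_comb_line (n d : nat) (tau : {ffun 'I_n -> option 'I_d}) : Prop :=
  exists i, tau i = None.

Definition sigma_tau (n d : nat) (tau : {ffun 'I_n -> option 'I_d}) (k : R)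
  : 'I_n -> R :=
  fun i => match tau i with Some j => (j.+1)%:R | None => k end.

Definition pt (n : nat) (v : 'I_n -> R * R) (sigma : 'I_n -> R) : R * R :=
  (\sum_(i < n) sigma i * (v i).1, \sum_(i < n) sigma i * (v i).2).

Definition Pset (n d : nat) (v : 'I_n -> R * R) (q : R * R) : Prop :=
  exists s : {ffun 'I_n -> 'I_d}, q = pt v (word_vec s).

Definition PL (n d : nat) (v : 'I_n -> R * R) (tau : {ffun 'I_n -> option 'I_d})
  (q : R * R) : Prop :=
  exists k : 'I_d, q = pt v (sigma_tau tau (k.+1)%:R).

Definition SL (n d : nat) (v : 'I_n -> R * R) (tau : {ffun 'I_n -> option 'I_d})
  (q : R * R) : Prop :=
  exists t : R, q = pt v (sigma_tau tau t).

Definition nu (q : R * R) : 'rV[R]_5 :=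
  \row_(i < 5) nth 0 [:: q.1 ^+ 2; q.1 * q.2; q.2 ^+ 2; q.1; q.2] i.

Definition affine_fun (g : 'rV[R]_5 -> R) : Prop :=
  exists (a : 'rV[R]_5) (c : R), forall z, g z = \sum_(i < 5) a 0 i * z 0 i + c.

Definition conv (A : 'rV[R]_5 -> Prop) (x : 'rV[R]_5) : Prop :=
  exists (m : nat) (w : 'I_m -> R) (z : 'I_m -> 'rV[R]_5),
    (forall i, 0 <= w i) /\ \sum_(i < m) w i = 1 /\ (forall i, A (z i)) /\
    x = \sum_(i < m) w i *: z i.

Definition is_convex (C : 'rV[R]_5 -> Prop) : Prop :=
  forall x y t, C x -> C y -> 0 <= t -> t <= 1 -> C (t *: x + (1 - t) *: y).

Definition is_face (F C : 'rV[R]_5 -> Prop) : Prop :=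
  (forall x, F x -> C x) /\ is_convex F /\
  forall x y t, C x -> C y -> 0 < t -> t < 1 ->
    F (t *: x + (1 - t) *: y) -> F x /\ F y.

Definition nu_img (A : R * R -> Prop) (z : 'rV[R]_5) : Prop :=
  exists q, A q /\ z = nu q.

End Defs.

(* The line S_L is the zero set of h(q) = det(q - p_0, u), with p_0 the point
   of parameter 0 on S_L and u its direction, whose x-component is positive.
   Since S_L meets P exactly in P_L, h vanishes on P exactly at P_L.  The
   square h^2 is a quadratic polynomial in q, i.e. an affine function g of
   nu(q); it is nonnegative on nu(P) with zero set nu(P_L) there.  An affine
   function that is nonnegative on B and vanishes on B exactly at A cuts out
   conv A as a face of conv B. *)

From HB Require Import structures.
From mathcomp Require Import all_boot all_order all_algebra.
From mathcomp Require Import ring lra.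
Set Implicit Arguments. Unset Strict Implicit. Unset Printing Implicit Defensive.
Import Order.TTheory GRing.Theory Num.Theory.
Local Open Scope ring_scope.

Section AffineFaces.
Variable R : realFieldType.
Implicit Types (A B : 'rV[R]_5 -> Prop) (g : 'rV[R]_5 -> R).

Lemma affine_funE g : affine_fun g ->
  exists (M : 'M[R]_(5, 1)) (c : R), forall z, g z = (z *m M) 0 0 + c.
Proof.
move=> [a [c gE]]; exists a^T, c => z; rewrite gE !mxE.
by congr (_ + _); apply: eq_bigr => i _; rewrite mxE mulrC.
Qed.

Lemma affine_fun_comb g m (w : 'I_m -> R) (z : 'I_m -> 'rV[R]_5) :
  affine_fun g -> \sum_(k < m) w k = 1 ->
  g (\sum_(k < m) w k *: z k) = \sum_(k < m) w k * g (z k).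
Proof.
move=> /affine_funE [M [c gE]] w1.
rewrite gE mulmx_suml summxE.
under eq_bigr do rewrite -scalemxAl mxE.
under [RHS]eq_bigr do rewrite gE mulrDr.
by rewrite big_split /= -mulr_suml w1 mul1r.
Qed.

Lemma affine_fun_convex2 g x y t : affine_fun g ->
  g (t *: x + (1 - t) *: y) = t * g x + (1 - t) * g y.
Proof.
move=> /affine_funE [M [c gE]]; rewrite !gE mulmxDl -!scalemxAl !mxE; ring.
Qed.

Lemma conv_sub A B : (forall x, A x -> B x) -> forall x, conv A x -> conv B x.
Proof.
move=> AB x [m [w [z [w0 [w1 [zA ->]]]]]].
by exists m, w, z; do 3!split=> //; move=> i; apply: AB.
Qed.

Lemma conv_is_convex A : is_convex (conv A).
Proof.
move=> x y t [m [w [z [w0 [w1 [zA ->]]]]]] [m' [w' [z' [w0' [w1' [zA' ->]]]]]] t0 t1.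
exists (m + m')%N,
  (fun k => match split k with inl i => t * w i | inr j => (1 - t) * w' j end),
  (fun k => match split k with inl i => z i | inr j => z' j end).
split; [|split; [|split]].
- by move=> k; case: split => i; apply: mulr_ge0; rewrite ?subr_ge0.
- rewrite big_split_ord /=.
  under eq_bigr do rewrite (unsplitK (inl _)).
  under [X in _ + X]eq_bigr do rewrite (unsplitK (inr _)).
  by rewrite -!mulr_sumr w1 w1' !mulr1 addrC subrK.
- by move=> k; case: split.
- rewrite [RHS]big_split_ord /= !scaler_sumr.
  congr (_ + _); apply: eq_bigr => i _;
  by rewrite ?(unsplitK (inl _)) ?(unsplitK (inr _)) scalerA.
Qed.

Section SupportingFunction.
Variables (A B : 'rV[R]_5 -> Prop) (g : 'rV[R]_5 -> R).
Hypotheses (g_affine : affine_fun g) (sAB : forall x, A x -> B x)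
  (gA : forall x, A x -> g x = 0) (gB_ge0 : forall x, B x -> 0 <= g x)
  (gB_eq0 : forall x, B x -> g x = 0 -> A x).

Lemma conv_supp_eq0 x : conv A x -> g x = 0.
Proof.
move=> [m [w [z [_ [w1 [zA ->]]]]]]; rewrite affine_fun_comb //.
by rewrite big1 // => i _; rewrite gA ?mulr0.
Qed.

Lemma conv_supp_ge0 x : conv B x -> 0 <= g x.
Proof.
move=> [m [w [z [w0 [w1 [zB ->]]]]]]; rewrite affine_fun_comb //.
by apply: sumr_ge0 => i _; apply: mulr_ge0 => //; apply: gB_ge0.
Qed.

(* A point of conv B on the zero set of g is a combination in which every
   point with nonzero weight lies in A; the others are replaced by one of those. *)
Lemma conv_supp_zero_set x : conv B x -> g x = 0 -> conv A x.
Proof.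
move=> [m [w [z [w0 [w1 [zB ->]]]]]]; rewrite affine_fun_comb // => sum0.
have wz0 i : w i * g (z i) = 0.
  by apply: (psumr_eq0P _ sum0) => // k _; rewrite mulr_ge0 ?gB_ge0.
have zA i : w i != 0 -> A (z i).
  move=> wi0; apply: gB_eq0 => //.
  by move/eqP: (wz0 i); rewrite mulf_eq0 (negbTE wi0) => /eqP.
have [i0 wi0] : exists i, w i != 0.
  apply/existsP; apply: contra_eqT w1 => /existsPn w_eq0.
  rewrite big1 => [|i _]; first by rewrite eq_sym oner_eq0.
  exact/eqP/negbNE.
exists m, w, (fun i => if w i == 0 then z i0 else z i); do 3!split=> //.
- by move=> i; case: eqP => [_|/eqP]; apply: zA.
- by apply: eq_bigr => i _; case: eqP => // ->; rewrite !scale0r.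
Qed.

Lemma face_of_supporting_function : is_face (conv A) (conv B).
Proof.
split; first exact: conv_sub.
split; first exact: conv_is_convex.
move=> x y t Bx By t0 t1 /conv_supp_eq0.
rewrite affine_fun_convex2 // => g0.
have gx := conv_supp_ge0 Bx; have gy := conv_supp_ge0 By.
have gx0 : g x = 0 by nra.
have gy0 : g y = 0 by nra.
by split; apply: conv_supp_zero_set.
Qed.

End SupportingFunction.
End AffineFaces.

Section PlaneLines.
Variable R : realFieldType.
Implicit Types (p u q : R * R) (t : R).

Definition line_point p u t : R * R := (p.1 + t * u.1, p.2 + t * u.2).

Definition line_eq p u q : R := (q.2 - p.2) * u.1 - (q.1 - p.1) * u.2.

Lemma line_eq_point p u t : line_eq p u (line_point p u t) = 0.
Proof. by rewrite /line_eq /=; ring. Qed.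

Lemma line_eq0P p u q : u.1 != 0 -> line_eq p u q = 0 ->
  q = line_point p u ((q.1 - p.1) / u.1).
Proof.
case: q => x y u1 /eqP; rewrite subr_eq0 /line_point /= => /eqP E.
congr pair; first by rewrite mulfVK // subrKC.
by rewrite mulrAC -E mulfK // subrKC.
Qed.

(* (a x + b y + c)^2 is a linear combination of x^2, xy, y^2, x, y and 1. *)
Lemma sqr_line_eq_affine_nu p u :
  exists g, affine_fun g /\ forall q, g (nu q) = line_eq p u q ^+ 2.
Proof.
pose a := - u.2; pose b := u.1; pose c := p.1 * u.2 - p.2 * u.1.
pose coef : 'rV[R]_5 :=
  \row_(i < 5) nth 0 [:: a ^+ 2; 2 * a * b; b ^+ 2; 2 * a * c; 2 * b * c] i.
exists (fun z => \sum_(i < 5) coef 0 i * z 0 i + c ^+ 2); split.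
  by exists coef, (c ^+ 2).
move=> q; rewrite !big_ord_recl big_ord0 !mxE /= /line_eq /a /b /c; ring.
Qed.

End PlaneLines.

Section CombinatorialLines.
Variables (R : realFieldType) (d n : nat) (v : 'I_n -> R * R).
Variable tau : {ffun 'I_n -> option 'I_d}.

Definition star_vec : 'I_n -> R := fun i => if tau i is None then 1 else 0.

Definition comb_line_base : R * R := pt v (sigma_tau tau 0).
Definition comb_line_dir : R * R := pt v star_vec.

Lemma pt_sigma_tau t :
  pt v (sigma_tau tau t) = line_point comb_line_base comb_line_dir t.
Proof.
rewrite /comb_line_base /comb_line_dir /line_point /pt /=.
congr pair; rewrite mulr_sumr -big_split; apply: eq_bigr => i _;
by rewrite /sigma_tau /star_vec; case: (tau i) => [j|];
  rewrite /= ?mul0r ?mul1r ?mulr0 ?addr0 ?add0r.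
Qed.

Lemma comb_line_dir_x_gt0 : (forall i, 0 < (v i).1) -> is_comb_line tau ->
  0 < comb_line_dir.1.
Proof.
move=> vx_gt0 [i0 tau_i0]; rewrite /comb_line_dir /pt /= (bigD1 i0) //=.
rewrite /star_vec tau_i0 mul1r ltr_wpDr ?vx_gt0 //.
by apply: sumr_ge0 => i _; case: (tau i) => [j|]; rewrite ?mul0r ?mul1r // ltW.
Qed.

Lemma PL_line_eq q : PL v tau q -> line_eq comb_line_base comb_line_dir q = 0.
Proof. by move=> [k ->]; rewrite pt_sigma_tau line_eq_point. Qed.

Lemma Pset_line_eq_PL : (forall i, 0 < (v i).1) -> is_comb_line tau ->
  (forall q, SL v tau q /\ Pset d v q -> PL v tau q) ->
  forall q, Pset d v q -> line_eq comb_line_base comb_line_dir q = 0 -> PL v tau q.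
Proof.
move=> vx_gt0 htau SL_P_PL q Pq /line_eq0P q_on_line; apply: SL_P_PL; split=> //.
have dir_x_neq0 : comb_line_dir.1 != 0 by rewrite gt_eqF ?comb_line_dir_x_gt0.
by eexists; rewrite pt_sigma_tau; apply: q_on_line.
Qed.

End CombinatorialLines.

Theorem lemma2p4 (R : realFieldType) (d n : nat) (v : 'I_n -> R * R)
  (hvx : forall i, 0 < (v i).1)
  (hdist : injective (fun s : {ffun 'I_n -> 'I_d} => pt v (word_vec R s)))
  (hline : forall tau : {ffun 'I_n -> option 'I_d}, is_comb_line tau ->
     forall q, (SL v tau q /\ Pset d v q) <-> PL v tau q)
  (tau : {ffun 'I_n -> option 'I_d}) (htau : is_comb_line tau) :
  (exists g : 'rV[R]_5 -> R, affine_fun g /\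
     (forall q, PL v tau q -> g (nu q) = 0) /\
     (forall q, Pset d v q -> ~ PL v tau q -> 0 < g (nu q))) /\
  is_face (conv (nu_img (PL v tau))) (conv (nu_img (Pset d v))).
Proof.
have [g [g_affine gE]] :=
  sqr_line_eq_affine_nu (comb_line_base v tau) (comb_line_dir v tau).
have PL_P q : PL v tau q -> Pset d v q by move=> /(hline tau htau q)[].
have g_PL q : PL v tau q -> g (nu q) = 0.
  by move=> /PL_line_eq; rewrite gE => ->; rewrite expr0n.
have g_ge0 q : 0 <= g (nu q) by rewrite gE sqr_ge0.
have g_eq0_PL q : Pset d v q -> g (nu q) = 0 -> PL v tau q.
  rewrite gE => Pq /eqP; rewrite sqrf_eq0 => /eqP.
  by apply: Pset_line_eq_PL => // r /(hline tau htau r).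
split.
  exists g; do 2!split=> //.
  move=> q Pq not_PLq; rewrite lt_def g_ge0 andbT.
  by apply/eqP => /(g_eq0_PL q Pq).
apply: (face_of_supporting_function g_affine).
- by move=> _ [q [PLq ->]]; exists q; split; first exact: PL_P.
- by move=> _ [q [PLq ->]]; apply: g_PL.
- by move=> _ [q [_ ->]].
- by move=> _ [q [Pq ->]] /(g_eq0_PL q Pq) PLq; exists q.
Qed.
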